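(* The functor $P:\ell\text{-BS}\to\ell\text{-BSYM}$ is left adjoint to the functor $\mathrm{Ext}_\ell:\ell\text{-BSYM}\to\ell\text{-BS}$. The counit at an object $(X,A,\models)$ is $\xi_{(X,A,\models)}=(\mathrm{id}_X,\mathrm{ext}_\ell):P(\mathrm{Ext}_\ell(X,A,\models))\to(X,A,\models)$, where $\mathrm{ext}_\ell:A\to\mathrm{Cont}(\mathrm{Ext}_\ell(X,A,\models))$ sends $a$ to the function $x\mapsto\models(x,a)$; i.e. for every object $(S,\alpha)$ of $\ell$-BS and every $\ell$-BSYM arrow $(f,\phi):P(S,\alpha)\to(X,A,\models)$ there is a unique $\ell$-BS arrow $\tilde f:(S,\alpha)\to\mathrm{Ext}_\ell(X,A,\models)$ with $(f,\phi)=\xi_{(X,A,\models)}\circ P(\tilde f)$ (namely $\tilde f=f$).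
   Context: Throughout, $\ell$ is a fixed finite distributive lattice with bottom $0$ and top $1$, regarded as a Heyting algebra with relative pseudocomplement $\to$, and equipped with unary operations $T_r$ ($r\in\ell$) given by $T_r(x)=1$ if $x=r$ and $T_r(x)=0$ otherwise. An $\ell$-VL-algebra is an algebra $(A,\wedge,\vee,\to,(T_r)_{r\in\ell},0,1)$ of this signature belonging to the variety generated by $\ell$ (equivalently, algebras isomorphic to subalgebras of direct powers of $\ell$); homomorphisms preserve all these operations. $\mathrm{Subalg}(\ell)$ is the set of subalgebras of $\ell$. A Boolean space is a compact Hausdorff zero-dimensional space; $\ell$ and its subalgebras carry the discrete topology. The category $\ell$-BS has as objects pairs $(S,\alpha)$ with $S$ a Boolean space and $\alpha$ a map from $\mathrm{Subalg}(\ell)$ to the closed subspaces of $S$ with $\alpha(\ell)=S$ and $\alpha(L_1\cap L_2)=\alpha(L_1)\cap\alpha(L_2)$; its arrows $f:(S_1,\alpha_1)\to(S_2,\alpha_2)$ are continuous maps with $f(\alpha_1(L))\subseteq\alpha_2(L)$ for all $L$. $\mathrm{Cont}(S,\alpha)$ is the set of continuous maps $v:S\to\ell$ with $v(\alpha(L))\subseteq L$ for all $L\in\mathrm{Subalg}(\ell)$, an $\ell$-VL-algebra under pointwise operations. An $\ell$-Boolean system is a triple $(X,A,\models)$ where $X$ is a nonempty set, $A$ is an $\ell$-VL-algebra, and $\models:X\times A\to\ell$ is a map such that for all $x\in X$, $a,b\in A$, $r\in\ell$: (1) $\models(x,\bigvee A_1)=\bigvee_{a\in A_1}\models(x,a)$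 for every subset $A_1\subseteq A$ (whose join exists in $A$), and $\models(x,a\wedge b)=\models(x,a)\wedge\models(x,b)$; (2) if $x_1\neq x_2$ then $\models(x_1,a)\neq\models(x_2,a)$ for some $a$; (3) $\models(x,a\to b)=\models(x,a)\to\models(x,b)$; (4) $\models(x,T_r(a))=T_r(\models(x,a))$; (5) $\models(x,0)=0$, $\models(x,1)=1$. The category $\ell$-BSYM has these as objects; an arrow $(\psi_1,\psi_2):(X,A,\models_1)\to(Y,B,\models_2)$ is a function $\psi_1:X\to Y$ with an $\ell$-VL-algebra homomorphism $\psi_2:B\to A$ such that $\models_1(x,\psi_2(b))=\models_2(\psi_1(x),b)$; composition is $(\phi_1,\phi_2)\circ(\psi_1,\psi_2)=(\phi_1\circ\psi_1,\psi_2\circ\phi_2)$. Functors: $\mathrm{Ext}_\ell(X,A,\models)=((X,\tau_A),\alpha_A)$, where $\tau_A$ is the topology on $X$ generated by the sets $\{x\in X:\models(x,a)=r\}$ ($a\in A$, $r\in\ell$) and $\alpha_A(K)=\{x\in X:\models(x,a)\in K\text{ for all }a\in A\}$ for $K\in\mathrm{Subalg}(\ell)$; $\mathrm{Ext}_\ell(\psi_1,\psi_2)=\psi_1$. $P(S,\alpha)=(S,\mathrm{Cont}(S,\alpha),\models_S)$ with $\models_S(s,v)=v(s)$, and $P(f)=(f,f^{-1})$ with $f^{-1}(v)=v\circ f$. *)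

From HB Require Import structures.
From mathcomp Require Import all_boot all_order.
Set Implicit Arguments. Unset Strict Implicit. Unset Printing Implicit Defensive.
Import Order.TTheory.
Local Open Scope order_scope.

Section Topology.
Variable S : Type.
Implicit Types (op : (S -> Prop) -> Prop).

Definition is_topology op : Prop :=
  [/\ op (fun _ => True),
      (forall U V, op U -> op V -> op (fun x => U x /\ V x)) &
      (forall F : (S -> Prop) -> Prop, (forall U, F U -> op U) ->
         op (fun x => exists U, F U /\ U x))].

Definition closed_set op (C : S -> Prop) : Prop := op (fun x => ~ C x).

Definition compact op : Prop :=
  forall F : (S -> Prop) -> Prop, (forall U, F U -> op U) ->
    (forall x, exists U, F U /\ U x) ->
    exists (n : nat) (G : nat -> S -> Prop),
      (forall i, (i < n)%N -> F (G i)) /\ (forall x, exists i, (i < n)%N /\ G i x).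

Definition hausdorff op : Prop :=
  forall x y, x <> y -> exists U V, [/\ op U, op V, U x, V y & forall z, ~ (U z /\ V z)].

Definition zero_dim op : Prop :=
  forall U x, op U -> U x ->
    exists V, [/\ op V, closed_set op V, V x & forall z, V z -> U z].

Definition boolean_space op : Prop :=
  [/\ is_topology op, compact op, hausdorff op & zero_dim op].

Definition generated_topology (B : (S -> Prop) -> Prop) (U : S -> Prop) : Prop :=
  forall op, is_topology op -> (forall V, B V -> op V) -> op U.

End Topology.

Definition continuous (S1 S2 : Type) (op1 : (S1 -> Prop) -> Prop)
  (op2 : (S2 -> Prop) -> Prop) (f : S1 -> S2) : Prop :=
  forall U, op2 U -> op1 (fun s => U (f s)).

Section Lat.
Context {disp : Order.disp_t} (L : finTBDistrLatticeType disp).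

(* relative pseudocomplement in a finite distributive lattice *)
Definition limpl (x y : L) : L := \join_(z : L | z `&` x <= y) z.

Definition lT (r x : L) : L := if x == r then \top else \bot.

Definition is_subalg (K : {set L}) : Prop :=
  [/\ \bot \in K, \top \in K,
      (forall x y, x \in K -> y \in K ->
         [/\ x `&` y \in K, x `|` y \in K & limpl x y \in K]) &
      (forall r x, x \in K -> lT r x \in K)].

(* continuity into discrete l *)
Definition continuous_to_l (S : Type) (op : (S -> Prop) -> Prop) (v : S -> L) : Prop :=
  forall U : L -> Prop, op (fun s => U (v s)).

Definition is_lBS (S : Type) (op : (S -> Prop) -> Prop) (al : {set L} -> S -> Prop) : Prop :=
  [/\ boolean_space op,
      (forall K, is_subalg K -> closed_set op (al K)),
      (forall s, al [set: L] s) &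
      (forall K1 K2, is_subalg K1 -> is_subalg K2 ->
         forall s, al (K1 :&: K2) s <-> al K1 s /\ al K2 s)].

Definition is_lBS_arrow (S1 S2 : Type) (op1 : (S1 -> Prop) -> Prop)
  (al1 : {set L} -> S1 -> Prop) (op2 : (S2 -> Prop) -> Prop)
  (al2 : {set L} -> S2 -> Prop) (f : S1 -> S2) : Prop :=
  continuous op1 op2 f /\
  (forall K, is_subalg K -> forall s, al1 K s -> al2 K (f s)).

Definition in_Cont (S : Type) (op : (S -> Prop) -> Prop) (al : {set L} -> S -> Prop)
  (v : S -> L) : Prop :=
  continuous_to_l op v /\ (forall K, is_subalg K -> forall s, al K s -> v s \in K).

Record vl_ops (A : Type) := VLOps {
  vmeet : A -> A -> A; vjoin : A -> A -> A; vimpl : A -> A -> A;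
  vT : L -> A -> A; vbot : A; vtop : A }.

(* l-VL-algebras: isomorphic to a subalgebra of a direct power of l *)
Definition is_lVL (A : Type) (o : vl_ops A) : Prop :=
  exists (I : Type) (e : A -> I -> L),
    (forall a b, (forall i, e a i = e b i) -> a = b) /\
    (forall a b i, [/\ e (vmeet o a b) i = e a i `&` e b i,
                       e (vjoin o a b) i = e a i `|` e b i &
                       e (vimpl o a b) i = limpl (e a i) (e b i)]) /\
    (forall r a i, e (vT o r a) i = lT r (e a i)) /\
    (forall i, e (vbot o) i = \bot /\ e (vtop o) i = \top).

Definition vle (A : Type) (o : vl_ops A) (a b : A) : Prop := vmeet o a b = a.

Definition is_lub_A (A : Type) (o : vl_ops A) (A1 : A -> Prop) (j : A) : Prop :=
  (forall a, A1 a -> vle o a j) /\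
  (forall u, (forall a, A1 a -> vle o a u) -> vle o j u).

Definition is_lub_L (P : L -> Prop) (t : L) : Prop :=
  (forall r, P r -> r <= t) /\ (forall u, (forall r, P r -> r <= u) -> t <= u).

Definition is_lBsystem (X A : Type) (o : vl_ops A) (models : X -> A -> L) : Prop :=
  [/\ inhabited X, is_lVL o,
      (forall x (A1 : A -> Prop) j, is_lub_A o A1 j ->
         is_lub_L (fun r => exists a, A1 a /\ models x a = r) (models x j)) /\
      (forall x a b, models x (vmeet o a b) = models x a `&` models x b),
      (forall x1 x2, x1 <> x2 -> exists a, models x1 a <> models x2 a) &
      [/\ (forall x a b, models x (vimpl o a b) = limpl (models x a) (models x b)),
          (forall x r a, models x (vT o r a) = lT r (models x a)) &
          (forall x, models x (vbot o) = \bot /\ models x (vtop o) = \top)]].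

(* An l-BSYM arrow (f, phi) : P(S, al) -> (X, A, models):
   phi : A -> Cont(S, al) is a homomorphism (operations of Cont are pointwise)
   and models_S(s, phi b) = phi b s = models (f s) b. *)
Definition is_lBSYM_arrow_P (S : Type) (op : (S -> Prop) -> Prop)
  (al : {set L} -> S -> Prop) (X A : Type) (o : vl_ops A) (models : X -> A -> L)
  (f : S -> X) (phi : A -> S -> L) : Prop :=
  [/\ (forall a, in_Cont op al (phi a)),
      (forall a b s, [/\ phi (vmeet o a b) s = phi a s `&` phi b s,
                         phi (vjoin o a b) s = phi a s `|` phi b s &
                         phi (vimpl o a b) s = limpl (phi a s) (phi b s)]),
      (forall r a s, phi (vT o r a) s = lT r (phi a s)),
      (forall s, phi (vbot o) s = \bot /\ phi (vtop o) s = \top) &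
      (forall s b, phi b s = models (f s) b)].

Definition Ext_open (X A : Type) (models : X -> A -> L) : (X -> Prop) -> Prop :=
  generated_topology (fun U => exists a r, forall x, U x <-> models x a = r).

Definition Ext_alpha (X A : Type) (models : X -> A -> L) (K : {set L}) (x : X) : Prop :=
  forall a, models x a \in K.

Definition ext (X A : Type) (models : X -> A -> L) (a : A) : X -> L :=
  fun x => models x a.

End Lat.

(* The counit (id_X, ext) is an arrow because each ext a is locally constant
   for the topology generated by the level sets of models, and models commutes
   with the operations of A (for joins, because vjoin a b is the least upper
   bound of {a, b} and models preserves such joins).  Universality then costs
   nothing: an arrow (f, phi) out of P(S, al) has phi b = models (f _) b, so
   preimages under f of the generating level sets are preimages under phi b of
   points, hence open, and f itself is the unique factorisation. *)
From HB Require Import structures.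
From mathcomp Require Import all_boot all_order.
From Stdlib Require Import FunctionalExtensionality PropExtensionality.
Set Implicit Arguments. Unset Strict Implicit. Unset Printing Implicit Defensive.
Import Order.TTheory.
Local Open Scope order_scope.

Lemma open_ext (S : Type) (op : (S -> Prop) -> Prop) (U V : S -> Prop) :
  op U -> (forall x, U x <-> V x) -> op V.
Proof.
move=> opU UV; suff -> : V = U by [].
apply: functional_extensionality => x; apply: propositional_extensionality.
by split => /UV.
Qed.

Lemma preimage_topology (S1 S2 : Type) (op : (S1 -> Prop) -> Prop) (f : S1 -> S2) :
  is_topology op -> is_topology (fun V : S2 -> Prop => op (fun s => V (f s))).
Proof.
case=> opT opI opU; split=> // [U V|F opF]; first exact: opI.
pose G W := exists V, F V /\ W = (fun s => V (f s)).
apply: (@open_ext _ _ (fun s => exists W, G W /\ W s)).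
  by apply: opU => W [V [FV ->]]; apply: opF.
move=> s; split=> [[W [[V [FV ->]] Vfs]]|[V [FV Vfs]]]; first by exists V.
by exists (fun s => V (f s)); split=> //; exists V.
Qed.

Lemma continuous_generated (S1 S2 : Type) (op : (S1 -> Prop) -> Prop)
    (B : (S2 -> Prop) -> Prop) (f : S1 -> S2) :
  is_topology op -> (forall V, B V -> op (fun s => V (f s))) ->
  continuous op (generated_topology B) f.
Proof.
move=> top_op opB U /(_ (fun V => op (fun s => V (f s)))) genU.
by apply: genU opB; apply: preimage_topology.
Qed.

Section BooleanSystems.
Context {disp : Order.disp_t} (L : finTBDistrLatticeType disp).
Variables (X A : Type) (o : vl_ops L A) (models : X -> A -> L).

Lemma lVL_vjoin_lub (a b : A) :
  is_lVL o -> is_lub_A o (fun c => c = a \/ c = b) (vjoin o a b).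
Proof.
case=> I [e [e_inj [e_ops _]]].
have e_le c d : vle o c d -> e c =1 (fun i => e c i `&` e d i).
  by move=> cd i; rewrite -[in LHS]cd; case: (e_ops c d i).
split=> [c ab_c|u ub_u]; apply: e_inj => i.
  case: (e_ops c (vjoin o a b) i) => -> _ _; case: (e_ops a b i) => _ -> _.
  by case: ab_c => ->; rewrite ?joinKI // joinC joinKI.
case: (e_ops (vjoin o a b) u i) => -> _ _; case: (e_ops a b i) => _ -> _.
by rewrite meetUl -(e_le a) -?(e_le b) //; apply: ub_u; [right|left].
Qed.

Hypothesis hsys : is_lBsystem o models.

Lemma lBsystem_vjoin x (a b : A) :
  models x (vjoin o a b) = models x a `|` models x b.
Proof.
case: hsys => _ lVL_A [models_lub _] _ _.
have [ub least] := models_lub x _ _ (lVL_vjoin_lub a b lVL_A).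
apply: le_anti; rewrite leUx.
apply/and3P; split; last 2 first.
- by apply: ub; exists a; split=> //; left.
- by apply: ub; exists b; split=> //; right.
by apply: least => r [c [[->|->] <-]]; [exact: leUl | exact: leUr].
Qed.

Lemma ext_continuous (a : A) : continuous_to_l (Ext_open models) (ext models a).
Proof.
move=> U op top_op op_basic; case: top_op => _ _ opU.
pose F V := exists r, U r /\ (forall x, V x <-> models x a = r).
apply: (@open_ext _ _ (fun x => exists V, F V /\ V x)).
  by apply: opU => V [r [_ Vr]]; apply: op_basic; exists a, r.
move=> x; split=> [[V [[r [Ur /(_ x) Vr]] /Vr xr]]|Ux]; first by rewrite /ext xr.
by exists (fun y => models y a = models x a); split=> //; exists (models x a).
Qed.

Lemma ext_in_Cont (a : A) : in_Cont (Ext_open models) (Ext_alpha models) (ext models a).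
Proof. by split=> [|K _ x]; [exact: ext_continuous | apply]. Qed.

Lemma counit_lBSYM_arrow :
  is_lBSYM_arrow_P (Ext_open models) (Ext_alpha models) o models id (ext models).
Proof.
case: hsys => _ _ [_ models_meet] _ [models_impl models_T models_bt].
split=> // [|a b s|r a s]; first exact: ext_in_Cont.
  by rewrite /ext models_meet models_impl lBsystem_vjoin.
by rewrite /ext models_T.
Qed.

Lemma lBSYM_arrow_lBS_arrow (S : Type) (op : (S -> Prop) -> Prop)
    (al : {set L} -> S -> Prop) (f : S -> X) (phi : A -> S -> L) :
  is_topology op -> is_lBSYM_arrow_P op al o models f phi ->
  is_lBS_arrow op al (Ext_open models) (Ext_alpha models) f.
Proof.
move=> top_op [phi_Cont _ _ _ phi_models]; split=> [|K subK s al_s b].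
  apply: continuous_generated => // V [b [r Vbr]].
  apply: (open_ext ((phi_Cont b).1 (fun y => y = r))) => s /=.
  by rewrite phi_models Vbr.
by rewrite -phi_models; apply: (phi_Cont b).2.
Qed.

End BooleanSystems.

Theorem mainTheorem4 (disp : Order.disp_t) (L : finTBDistrLatticeType disp)
  (X A : Type) (o : vl_ops L A) (models : X -> A -> L)
  (hsys : is_lBsystem o models) :
  is_lBSYM_arrow_P (Ext_open models) (Ext_alpha models) o models id (ext models)
  /\
  (forall (S : Type) (op : (S -> Prop) -> Prop) (al : {set L} -> S -> Prop),
     is_lBS op al ->
     forall (f : S -> X) (phi : A -> S -> L),
     is_lBSYM_arrow_P op al o models f phi ->
     exists g : S -> X,
       [/\ is_lBS_arrow op al (Ext_open models) (Ext_alpha models) g,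
           (forall s, f s = g s),
           (forall a s, phi a s = ext models a (g s)) &
           (forall g' : S -> X,
              is_lBS_arrow op al (Ext_open models) (Ext_alpha models) g' ->
              (forall s, f s = g' s) ->
              (forall a s, phi a s = ext models a (g' s)) ->
              forall s, g' s = g s)]).
Proof.
split; first exact: counit_lBSYM_arrow.
move=> S op al [[top_op _ _ _] _ _ _] f phi f_phi.
exists f; split=> [|//|a s|g' _ fg' _ s]; last by rewrite fg'.
  exact: lBSYM_arrow_lBS_arrow f_phi.
by case: f_phi => _ _ _ _ ->.
Qed.
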